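(* Consider the two-slab, three-element (periodic) space-time SBP scheme: unknowns $\boldsymbol\rho^{I},\boldsymbol g^{I}_k,\boldsymbol\rho^{II},\boldsymbol g^{II}_k$ ($k=1,\dots,n_v$) satisfying, for slab I, $$\mathsf D_t\boldsymbol\rho^{I}+\tilde{\mathsf D}_x\langle v\boldsymbol g^{I}\rangle=-\sigma_a\boldsymbol\rho^{I}-\mathsf H_t^{-1}\mathsf t_B\mathsf t_B^\top(\boldsymbol\rho^{I}-\boldsymbol\rho^{I}(0)),$$ $$\mathsf D_t\boldsymbol g^{I}_k+\tfrac{v_k}{\varepsilon}\tilde{\mathsf D}_x\boldsymbol g^{I}_k-\tfrac1\varepsilon\langle v\tilde{\mathsf D}_x\boldsymbol g^{I}\rangle+\tfrac{v_k}{\varepsilon^2}\tilde{\mathsf D}_x\boldsymbol\rho^{I}=-\Big(\tfrac{\sigma_s}{\varepsilon^2}+\sigma_a\Big)\boldsymbol g^{I}_k-\mathsf H_t^{-1}\mathsf t_B\mathsf t_B^\top(\boldsymbol g^{I}_k-\boldsymbol g^{I}_k(0)),$$ and for slab II the same equations with superscript $II$ and with the initial SAT terms replaced by $-\mathsf H_t^{-1}\mathsf t_B(\mathsf t_B^\top\boldsymbol\rho^{II}-\mathsf t_T^\top\boldsymbol\rho^{I})$ and $-\mathsf H_t^{-1}\mathsf t_B(\mathsf t_B^\top\boldsymbol g^{II}_k-\mathsf t_T^\top\boldsymbol g^{I}_k)$ respectively; the initial data satisfy $\langle\boldsymbol g^{I}(0)\rangle=0$. Then every solution satisfies $\langle\boldsymbol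 g^{I}\rangle=0$ and $\langle\boldsymbol g^{II}\rangle=0$.
   Context: SBP operators: $\bar{\mathsf D}=\bar{\mathsf H}^{-1}\bar{\mathsf Q}$ on nodes $x_0<\dots<x_n$ is a degree-$p$ SBP approximation of $d/dx$ if $\bar{\mathsf D}\boldsymbol x^k=k\boldsymbol x^{k-1}$ for $0\le k\le p$, $\bar{\mathsf H}$ is diagonal symmetric positive definite, and $\bar{\mathsf Q}+\bar{\mathsf Q}^\top=\bar{\mathsf E}=\bar{\boldsymbol t}_R\bar{\boldsymbol t}_R^\top-\bar{\boldsymbol t}_L\bar{\boldsymbol t}_L^\top=\mathrm{diag}(-1,0,\dots,0,1)$, $\bar{\boldsymbol t}_L,\bar{\boldsymbol t}_R$ first/last unit vectors. $\bar{\mathsf D}_x=\bar{\mathsf H}_x^{-1}\bar{\mathsf Q}_x$ on $n_x+1$ spatial nodes per element, $\bar{\mathsf S}_x=\bar{\mathsf Q}_x-\frac12\bar{\mathsf E}_x$; $\bar{\mathsf D}_t=\bar{\mathsf H}_t^{-1}\bar{\mathsf Q}_t$ on $n_t+1$ temporal nodes per slab, with first/last unit vectors $\bar{\boldsymbol t}_B,\bar{\boldsymbol t}_T$. $\tilde{\bar{\mathsf D}}^G_x=(\mathsf I_3\otimes\bar{\mathsf H}_x^{-1})\tilde{\bar{\mathsf Q}}^G_x$, with $\tilde{\bar{\mathsf Q}}^G_x$ the $3\times3$ block matrix having diagonal blocks $\bar{\mathsf S}_x$, blocks $(1,2),(2,3),(3,1)$ equal to $\frac12\bar{\boldsymbol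 t}_R\bar{\boldsymbol t}_L^\top$, blocks $(2,1),(3,2),(1,3)$ equal to $-\frac12\bar{\boldsymbol t}_L\bar{\boldsymbol t}_R^\top$. With identities $\mathsf I_{n_x},\mathsf I_{n_t}$ of sizes $n_x+1,n_t+1$: $\tilde{\mathsf D}_x=\mathsf I_{n_t}\otimes\tilde{\bar{\mathsf D}}^G_x$, $\mathsf D_t=\bar{\mathsf D}_t\otimes\mathsf I_3\otimes\mathsf I_{n_x}$, $\mathsf H_t=\bar{\mathsf H}_t\otimes\mathsf I_3\otimes\mathsf I_{n_x}$, $\mathsf t_B=\bar{\boldsymbol t}_B\otimes\mathsf I_3\otimes\mathsf I_{n_x}$, $\mathsf t_T=\bar{\boldsymbol t}_T\otimes\mathsf I_3\otimes\mathsf I_{n_x}$. Velocity nodes $v_k$, weights $\omega_k$ with $\sum\omega_k=1$, $\sum\omega_kv_k=0$; $\langle\boldsymbol a\rangle=\sum_k\omega_k\boldsymbol a_k$. $\varepsilon>0$, $\sigma_s>0$, $\sigma_a\ge0$; $\boldsymbol\rho^{I}(0),\boldsymbol g^{I}_k(0)$ given initial-data vectors. *)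

From HB Require Import structures.
From mathcomp Require Import all_boot all_order all_algebra.
Set Implicit Arguments. Unset Strict Implicit. Unset Printing Implicit Defensive.
Import Order.TTheory GRing.Theory Num.Theory.
Local Open Scope ring_scope.

Definition ksplit (m n : nat) (k : 'I_(m * n)) : 'I_m * 'I_n :=
  enum_val (cast_ord (esym (@mxvec_cast m n)) k).

Definition kron (R : pzRingType) (m1 n1 m2 n2 : nat)
  (A : 'M[R]_(m1, n1)) (B : 'M[R]_(m2, n2)) : 'M[R]_(m1 * m2, n1 * n2) :=
  \matrix_(i, j) (A (ksplit i).1 (ksplit j).1 * B (ksplit i).2 (ksplit j).2).

Definition tfirst (R : pzRingType) (n : nat) : 'cV[R]_n.+1 :=
  \col_i (i == ord0)%:R.
Definition tlast (R : pzRingType) (n : nat) : 'cV[R]_n.+1 :=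
  \col_i (i == ord_max)%:R.

Definition Ebar (R : pzRingType) (n : nat) : 'M[R]_n.+1 :=
  tlast R n *m (tlast R n)^T - tfirst R n *m (tfirst R n)^T.

Definition SBP (R : realFieldType) (n p : nat) (x : 'I_n.+1 -> R)
  (H Q : 'M[R]_n.+1) : Prop :=
  [/\ (forall i j : 'I_n.+1, (i < j)%N -> x i < x j),
      is_diag_mx H /\ H^T = H /\
        (forall u : 'cV[R]_n.+1, u != 0 -> 0 < (u^T *m H *m u) 0 0),
      Q + Q^T = Ebar R n &
      forall k : nat, (k <= p)%N ->
        (invmx H *m Q) *m (\col_i (x i ^+ k)) = k%:R *: \col_i (x i ^+ k.-1)].

Definition Pcyc (R : pzRingType) : 'M[R]_3 :=
  \matrix_(a, c) ((nat_of_ord c == (a.+1 %% 3)%N)%:R).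

(* global (periodic, 3 elements) spatial SBP matrix \tilde{\bar Q}^G_x *)
Definition QGx (R : fieldType) (nx : nat) (Qx : 'M[R]_nx.+1)
  : 'M[R]_(3 * nx.+1) :=
  let Sx := Qx - 2^-1 *: Ebar R nx in
  kron (1%:M : 'M[R]_3) Sx
  + kron (Pcyc R) (2^-1 *: (tlast R nx *m (tfirst R nx)^T))
  + kron (Pcyc R)^T (- 2^-1 *: (tfirst R nx *m (tlast R nx)^T)).

Definition DGx (R : fieldType) (nx : nat) (Hx Qx : 'M[R]_nx.+1)
  : 'M[R]_(3 * nx.+1) :=
  kron (1%:M : 'M[R]_3) (invmx Hx) *m QGx Qx.

Definition vavg (R : pzRingType) (nv N : nat) (w : 'I_nv -> R)
  (a : 'I_nv -> 'cV[R]_N) : 'cV[R]_N :=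
  \sum_(k < nv) w k *: a k.

From HB Require Import structures.
From mathcomp Require Import all_boot all_order all_algebra.
From mathcomp Require Import lra.
Import Order.TTheory GRing.Theory Num.Theory.
Local Open Scope ring_scope.
Set Implicit Arguments. Unset Strict Implicit.

(* Averaging the kinetic equations of a slab against the weights kills all
   spatial terms: the flux <v D_x g> enters once with each sign and <v> = 0
   removes the D_x rho term.  Hence G = <g> solves the damped temporal SBP-SAT
   problem D_t G = - c G - H_t^-1 t_B t_B^T G with c = sigma_s / eps^2 +
   sigma_a > 0 and zero data (in slab II the inflow datum t_T^T <g^I> vanishes
   by slab I).  Multiplying by G^T H_t and using Q_t + Q_t^T = E_t gives
   2 c |G|_H^2 + |t_T^T G|^2 + |t_B^T G|^2 = 0, so G = 0. *)

Lemma ksplit_bij m n : bijective (@ksplit m n).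
Proof.
exists (fun p => cast_ord (@mxvec_cast m n) (enum_rank p)) => [k | p].
  by rewrite /ksplit enum_valK cast_ordKV.
by rewrite /ksplit cast_ordK enum_rankK.
Qed.

Lemma ksplit_inj m n : injective (@ksplit m n).
Proof. exact: bij_inj (ksplit_bij m n). Qed.

Lemma big_ksplit (V : nmodType) m n (F : 'I_m -> 'I_n -> V) :
  \sum_(k < m * n) F (ksplit k).1 (ksplit k).2 = \sum_(a < m) \sum_(b < n) F a b.
Proof.
rewrite pair_big (reindex (@ksplit m n)) //.
by case: (ksplit_bij m n) => h hK Kh; exists h => x _.
Qed.

Section Kronecker.
Variable R : pzRingType.

Lemma trmx_kron m1 n1 m2 n2 (A : 'M[R]_(m1, n1)) (B : 'M[R]_(m2, n2)) :
  (kron A B)^T = kron A^T B^T.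
Proof. by apply/matrixP => i j; rewrite !mxE. Qed.

Lemma kronDl m1 n1 m2 n2 (A B : 'M[R]_(m1, n1)) (C : 'M[R]_(m2, n2)) :
  kron (A + B) C = kron A C + kron B C.
Proof. by apply/matrixP => i j; rewrite !mxE mulrDl. Qed.

Lemma kronNl m1 n1 m2 n2 (A : 'M[R]_(m1, n1)) (C : 'M[R]_(m2, n2)) :
  kron (- A) C = - kron A C.
Proof. by apply/matrixP => i j; rewrite !mxE mulNr. Qed.

Lemma kronBl m1 n1 m2 n2 (A B : 'M[R]_(m1, n1)) (C : 'M[R]_(m2, n2)) :
  kron (A - B) C = kron A C - kron B C.
Proof. by rewrite kronDl kronNl. Qed.

Lemma is_diag_mx_kron m n (A : 'M[R]_m) (B : 'M[R]_n) :
  is_diag_mx A -> is_diag_mx B -> is_diag_mx (kron A B).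
Proof.
move=> /is_diag_mxP dA /is_diag_mxP dB; apply/is_diag_mxP => i j ij.
have : ksplit i != ksplit j by rewrite (inj_eq (@ksplit_inj m n)).
rewrite mxE; case: (ksplit i) (ksplit j) => a b [c d] /=.
rewrite xpair_eqE negb_and => /orP[ac | bd]; first by rewrite dA ?mul0r.
by rewrite dB ?mulr0.
Qed.

Lemma kron1 m n : kron (1%:M : 'M[R]_m) (1%:M : 'M[R]_n) = 1%:M.
Proof.
apply/matrixP => i j; rewrite !mxE -(inj_eq (@ksplit_inj m n)).
case: (ksplit i) (ksplit j) => a b [c d]; rewrite xpair_eqE /=.
by case: eqP; case: eqP; rewrite ?mulr0 ?mulr1 ?mul0r.
Qed.

End Kronecker.

Lemma mulmx_kron (R : comPzRingType) m1 n1 p1 m2 n2 p2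
  (A : 'M[R]_(m1, n1)) (B : 'M[R]_(m2, n2))
  (C : 'M[R]_(n1, p1)) (D : 'M[R]_(n2, p2)) :
  kron A B *m kron C D = kron (A *m C) (B *m D).
Proof.
apply/matrixP => i j; rewrite !mxE big_distrlr /=.
rewrite -(big_ksplit (fun a b => A (ksplit i).1 a * C a (ksplit j).1
                                  * (B (ksplit i).2 b * D b (ksplit j).2))).
by apply: eq_bigr => k _; rewrite !mxE mulrACA.
Qed.

Section Energy.
Variable R : realFieldType.

Definition posdef n (K : 'M[R]_n) :=
  forall u : 'cV[R]_n, u != 0 -> 0 < (u^T *m K *m u) 0 0.

Lemma sqnorm_ge0 n (u : 'cV[R]_n) : 0 <= (u^T *m u) 0 0.
Proof. by rewrite mxE; apply: sumr_ge0 => i _; rewrite mxE -expr2 sqr_ge0. Qed.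

Lemma qform_tr n (K : 'M[R]_n) (u : 'cV[R]_n) :
  (u^T *m K^T *m u) 0 0 = (u^T *m K *m u) 0 0.
Proof.
transitivity ((u^T *m K *m u)^T 0 0); last by rewrite mxE.
by rewrite !trmx_mul trmxK mulmxA.
Qed.

Lemma qform_diag n (d : 'rV[R]_n) (u : 'cV[R]_n) :
  (u^T *m diag_mx d *m u) 0 0 = \sum_i d 0 i * u i 0 ^+ 2.
Proof.
rewrite mul_mx_diag mxE; apply: eq_bigr => i _.
by rewrite !mxE [_ * d 0 i]mulrC -mulrA -expr2.
Qed.

Lemma diag_posdef n (K : 'M[R]_n) :
  is_diag_mx K -> (forall i, 0 < K i i) -> posdef K.
Proof.
move=> /diag_mxP[d ->] d_gt0 u /cV0Pn[i ui_neq0]; rewrite qform_diag.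
have d_pos j : 0 < d 0 j by have := d_gt0 j; rewrite mxE eqxx mulr1n.
rewrite (bigD1 i) //=; apply: ltr_wpDr.
  by apply: sumr_ge0 => j _; rewrite mulr_ge0 ?sqr_ge0 ?ltW.
by rewrite mulr_gt0 // lt0r sqrf_eq0 ui_neq0 sqr_ge0.
Qed.

Lemma posdef_unit n (K : 'M[R]_n) : posdef K -> K \in unitmx.
Proof.
move=> K_pd; rewrite unitmxE unitfE; apply/negP => /det0P[v v_neq0 vK].
have := K_pd v^T; rewrite trmx_eq0 trmxK vK mul0mx mxE ltxx.
by move/(_ v_neq0).
Qed.

Lemma posdef_diag_gt0 n (K : 'M[R]_n) (i : 'I_n) : posdef K -> 0 < K i i.
Proof.
move=> K_pd; have := K_pd (delta_mx i 0).
rewrite trmx_delta -rowE -colE !mxE; apply.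
by apply/cV0Pn; exists i; rewrite mxE !eqxx oner_eq0.
Qed.

Lemma sbp_sat_eq0 n p (K Q : 'M[R]_n) (T B : 'M[R]_(n, p)) (c : R) (G : 'cV[R]_n) :
  posdef K -> Q + Q^T = T *m T^T - B *m B^T -> 0 < c ->
  invmx K *m Q *m G = - (c *: G) - invmx K *m B *m (B^T *m G) -> G = 0.
Proof.
move=> K_pd Q_sbp c_gt0 eqG; have K_unit := posdef_unit K_pd.
have QG : Q *m G = - (c *: (K *m G)) - B *m (B^T *m G).
  rewrite -[Q *m G](mulKVmx K_unit) [invmx K *m _]mulmxA eqG.
  rewrite mulmxBr mulmxN -scalemxAr.
  by rewrite -[invmx K *m B *m _]mulmxA mulKVmx.
have boundary : (G^T *m (Q + Q^T) *m G) 0 0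
    = ((T^T *m G)^T *m (T^T *m G)) 0 0 - ((B^T *m G)^T *m (B^T *m G)) 0 0.
  rewrite Q_sbp mulmxBr mulmxBl !trmx_mul !trmxK !mulmxA.
  by rewrite [LHS]mxE [X in _ + X = _]mxE.
have interior : (G^T *m Q *m G) 0 0
    = - (c * (G^T *m K *m G) 0 0) - ((B^T *m G)^T *m (B^T *m G)) 0 0.
  by rewrite -mulmxA QG mulmxBr mulmxN -scalemxAr trmx_mul trmxK !mulmxA !mxE.
rewrite mulmxDr mulmxDl mxE qform_tr interior in boundary.
have [// | /K_pd q_gt0] := eqVneq G 0; exfalso.
have := sqnorm_ge0 (T^T *m G); have := sqnorm_ge0 (B^T *m G).
have : 0 < c * (G^T *m K *m G) 0 0 by rewrite mulr_gt0.
by move: (c * _) boundary => cq boundary; lra.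
Qed.

Lemma invmx_kron1 m n (H : 'M[R]_m) : H \in unitmx ->
  invmx (kron H (1%:M : 'M[R]_n)) = kron (invmx H) 1%:M.
Proof.
move=> H_unit; have HK : kron H (1%:M : 'M_n) *m kron (invmx H) 1%:M = 1%:M.
  by rewrite mulmx_kron mulmxV // mulmx1 kron1.
have [HK_unit _] := mulmx1_unit HK.
by rewrite -[RHS](mulKmx HK_unit) HK mulmx1.
Qed.

Lemma sbp_sat_kron_eq0 nt N pt (ts : 'I_nt.+1 -> R) (Hbt Qbt : 'M[R]_nt.+1)
  (c : R) (G : 'cV[R]_(nt.+1 * N)) :
  SBP pt ts Hbt Qbt -> 0 < c ->
  kron (invmx Hbt *m Qbt) 1%:M *m G = - (c *: G)
    - invmx (kron Hbt 1%:M) *m kron (tfirst R nt) 1%:M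
      *m ((kron (tfirst R nt) (1%:M : 'M_N))^T *m G) ->
  G = 0.
Proof.
move=> [_ [H_diag [_ H_pd]] Q_sbp _] c_gt0 eqG.
have KH_pd : posdef (kron Hbt (1%:M : 'M_N)).
  apply: diag_posdef => [|i]; first by rewrite is_diag_mx_kron ?scalar_mx_is_diag.
  by rewrite mxE [_ 1%:M _ _]mxE eqxx mulr1 posdef_diag_gt0.
have Dt_kron : invmx (kron Hbt 1%:M) *m kron Qbt 1%:M
              = kron (invmx Hbt *m Qbt) (1%:M : 'M_N).
  by rewrite invmx_kron1 ?posdef_unit // mulmx_kron mulmx1.
apply: (sbp_sat_eq0 (Q := kron Qbt 1%:M) (T := kron (tlast R nt) 1%:M)
  (B := kron (tfirst R nt) 1%:M) KH_pd _ c_gt0); last by rewrite Dt_kron.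
by rewrite !trmx_kron trmx1 -kronDl Q_sbp !mulmx_kron mulmx1 -kronBl.
Qed.

End Energy.

Section VelocityAverage.
Variables (R : comPzRingType) (nv : nat) (w : 'I_nv -> R).

Lemma eq_vavg n (f h : 'I_nv -> 'cV[R]_n) : f =1 h -> vavg w f = vavg w h.
Proof. by move=> fh; apply: eq_bigr => k _; rewrite fh. Qed.

Lemma vavgD n (f h : 'I_nv -> 'cV[R]_n) :
  vavg w (fun k => f k + h k) = vavg w f + vavg w h.
Proof. by rewrite /vavg -big_split; apply: eq_bigr => k _; rewrite scalerDr. Qed.

Lemma vavgN n (f : 'I_nv -> 'cV[R]_n) : vavg w (fun k => - f k) = - vavg w f.
Proof. by rewrite /vavg -sumrN; apply: eq_bigr => k _; rewrite scalerN. Qed.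

Lemma vavgB n (f h : 'I_nv -> 'cV[R]_n) :
  vavg w (fun k => f k - h k) = vavg w f - vavg w h.
Proof. by rewrite vavgD vavgN. Qed.

Lemma vavgZ n (a : R) (f : 'I_nv -> 'cV[R]_n) :
  vavg w (fun k => a *: f k) = a *: vavg w f.
Proof.
by rewrite /vavg scaler_sumr; apply: eq_bigr => k _; rewrite !scalerA mulrC.
Qed.

Lemma vavgZl n (a : R) (u : 'I_nv -> R) (f : 'I_nv -> 'cV[R]_n) :
  vavg w (fun k => (u k * a) *: f k) = a *: vavg w (fun k => u k *: f k).
Proof.
by rewrite -vavgZ; apply: eq_bigr => k _; rewrite !scalerA [u k * a]mulrC.
Qed.

Lemma vavg_mulmx m n (A : 'M[R]_(m, n)) (f : 'I_nv -> 'cV[R]_n) :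
  vavg w (fun k => A *m f k) = A *m vavg w f.
Proof. by rewrite /vavg mulmx_sumr; apply: eq_bigr => k _; rewrite scalemxAr. Qed.

Lemma vavg_cst n (X : 'cV[R]_n) : \sum_k w k = 1 -> vavg w (fun=> X) = X.
Proof. by rewrite /vavg -scaler_suml => ->; rewrite scale1r. Qed.

Lemma vavg_velocity_cst n (v : 'I_nv -> R) (X : 'cV[R]_n) :
  \sum_k w k * v k = 0 -> vavg w (fun k => v k *: X) = 0.
Proof.
move=> wv_sum0; rewrite /vavg (eq_bigr (fun k => (w k * v k) *: X)) => [|k _].
  by rewrite -scaler_suml wv_sum0 scale0r.
by rewrite scalerA.
Qed.

End VelocityAverage.

Lemma vavg_kinetic_eq (R : fieldType) nv n m (w v : 'I_nv -> R) (eps c : R)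
  (Dt Dx : 'M[R]_n) (M : 'M[R]_(n, m)) (T : 'M[R]_(m, n)) (Y : 'cV[R]_n)
  (g : 'I_nv -> 'cV[R]_n) (g0 : 'I_nv -> 'cV[R]_m) :
  \sum_k w k = 1 -> \sum_k w k * v k = 0 ->
  (forall k, Dt *m g k + (v k / eps) *: (Dx *m g k)
      - eps^-1 *: vavg w (fun j => v j *: (Dx *m g j))
      + (v k / eps ^+ 2) *: Y
    = - (c *: g k) - M *m (T *m g k - g0 k)) ->
  Dt *m vavg w g = - (c *: vavg w g) - M *m (T *m vavg w g - vavg w g0).
Proof.
move=> w_sum1 wv_sum0 eq_g.
have := eq_vavg w eq_g.
rewrite !(vavgD, vavgB, vavgN, vavgZ, vavg_mulmx, vavgZl) //.
rewrite vavg_cst // vavg_velocity_cst //.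
by rewrite scaler0 addr0 addrK.
Qed.

Theorem theorem3p10 (R : realFieldType)
  (nx nt px pt nv : nat)
  (xs : 'I_nx.+1 -> R) (Hx Qx : 'M[R]_nx.+1)
  (ts : 'I_nt.+1 -> R) (Hbt Qbt : 'M[R]_nt.+1)
  (v w : 'I_nv -> R) (eps sigs siga : R)
  (rho0 : 'cV[R]_(1 * (3 * nx.+1)))
  (g0 : 'I_nv -> 'cV[R]_(1 * (3 * nx.+1)))
  (rhoI rhoII : 'cV[R]_(nt.+1 * (3 * nx.+1)))
  (gI gII : 'I_nv -> 'cV[R]_(nt.+1 * (3 * nx.+1))) :
  SBP px xs Hx Qx ->
  SBP pt ts Hbt Qbt ->
  \sum_(k < nv) w k = 1 ->
  \sum_(k < nv) w k * v k = 0 ->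
  0 < eps -> 0 < sigs -> 0 <= siga ->
  let I3x : 'M[R]_(3 * nx.+1) := kron (1%:M : 'M[R]_3) (1%:M : 'M[R]_nx.+1) in
  let Dx : 'M[R]_(nt.+1 * (3 * nx.+1)) :=
    kron (1%:M : 'M[R]_nt.+1) (DGx Hx Qx) in
  let Dt : 'M[R]_(nt.+1 * (3 * nx.+1)) := kron (invmx Hbt *m Qbt) I3x in
  let Ht : 'M[R]_(nt.+1 * (3 * nx.+1)) := kron Hbt I3x in
  let tB := kron (tfirst R nt) I3x in
  let tT := kron (tlast R nt) I3x in
  let avg := vavg w in
  (* slab I *)
  Dt *m rhoI + Dx *m avg (fun k => v k *: gI k)
    = - (siga *: rhoI) - invmx Ht *m tB *m (tB^T *m rhoI - rho0) ->
  (forall k : 'I_nv,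
    Dt *m gI k + (v k / eps) *: (Dx *m gI k)
      - eps^-1 *: avg (fun j => v j *: (Dx *m gI j))
      + (v k / eps ^+ 2) *: (Dx *m rhoI)
    = - ((sigs / eps ^+ 2 + siga) *: gI k)
      - invmx Ht *m tB *m (tB^T *m gI k - g0 k)) ->
  (* slab II *)
  Dt *m rhoII + Dx *m avg (fun k => v k *: gII k)
    = - (siga *: rhoII) - invmx Ht *m tB *m (tB^T *m rhoII - tT^T *m rhoI) ->
  (forall k : 'I_nv,
    Dt *m gII k + (v k / eps) *: (Dx *m gII k)
      - eps^-1 *: avg (fun j => v j *: (Dx *m gII j))
      + (v k / eps ^+ 2) *: (Dx *m rhoII)
    = - ((sigs / eps ^+ 2 + siga) *: gII k)
      - invmx Ht *m tB *m (tB^T *m gII k - tT^T *m gI k)) ->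
  (* initial data *)
  vavg w g0 = 0 ->
  avg gI = 0 /\ avg gII = 0.
Proof.
move=> _ SBPt w_sum1 wv_sum0 eps_gt0 sigs_gt0 siga_ge0 I3x Dx Dt Ht tB tT avg
  _ eq_gI _ eq_gII g0_avg0.
have c_gt0 : 0 < sigs / eps ^+ 2 + siga.
  by rewrite ltr_wpDr // divr_gt0 // exprn_gt0.
have avg_eqI := vavg_kinetic_eq w_sum1 wv_sum0 eq_gI.
rewrite g0_avg0 subr0 /Dt /Ht /tB /I3x kron1 in avg_eqI.
have avg_gI0 := sbp_sat_kron_eq0 SBPt c_gt0 avg_eqI.
have avg_eqII := vavg_kinetic_eq w_sum1 wv_sum0 eq_gII.
rewrite vavg_mulmx avg_gI0 mulmx0 subr0 /Dt /Ht /tB /I3x kron1 in avg_eqII.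
by split; last exact: sbp_sat_kron_eq0 SBPt c_gt0 avg_eqII.
Qed.
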